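(* Let $(G,x,y)$ be an $n$-isobicyclic triple, written as a semidirect product $G=T\rtimes S$, $x=x_Sx_T$, $y=y_Sy_T$ of the standard $t$-isobicyclic triple $(T,x_T,y_T)$ by an $s$-isobicyclic triple $(S,x_S,y_S)$ via a diagonal action with eigenvalue $\lambda$ as in Theorem 4.1, where the decomposition is canonical, i.e. $T\cap Z(G)=1$. Then the order of $xy$ in $G$ equals the order of $x_Sy_S$ in $S$.
   Context: $(G,x,y)$ is $n$-isobicyclic if $\langle x\rangle,\langle y\rangle$ are cyclic of order $n$, $G=\langle x\rangle\langle y\rangle$, $\langle x\rangle\cap\langle y\rangle=1$, and some automorphism transposes $x,y$. The standard $t$-triple is $(C_t\times C_t,x_T,y_T)$ with $x_T,y_T$ a basis. The semidirect product with eigenvalue $\lambda\in\mathbb Z_t^*$ ($\gcd(s,t)=1$): $x_S$ acts by conjugation fixing $x_T$ and sending $y_T\mapsto y_T^\lambda$, $y_S$ sends $x_T\mapsto x_T^\lambda$ and fixes $y_T$. Every $n$-isobicyclic triple has such a decomposition with $S$ a cartesian (direct) product of prime-power isobicyclic triples, and there is a unique one with $t$ minimal, characterised by $T\cap Z(G)=1$ ($Z(G)$ the centre). *)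

From HB Require Import structures.
From mathcomp Require Import all_boot all_fingroup all_solvable.
Set Implicit Arguments. Unset Strict Implicit. Unset Printing Implicit Defensive.
Local Open Scope group_scope.

Definition isobicyclic (gT : finGroupType) (G : {group gT}) (x y : gT)
    (n : nat) : Prop :=
  [/\ #[x] = n, #[y] = n, <[x]> * <[y]> = G, <[x]> :&: <[y]> = 1
    & exists a : {perm gT}, [/\ a \in Aut G, a x = y & a y = x]].

Definition standard_triple (gT : finGroupType) (T : {group gT}) (xT yT : gT)
    (t : nat) : Prop :=
  [/\ #[xT] = t, #[yT] = t & <[xT]> \x <[yT]> = T].

From HB Require Import structures.
From mathcomp Require Import all_boot all_fingroup all_solvable.

Set Implicit Arguments.
Unset Strict Implicit.
Unset Printing Implicit Defensive.
Local Open Scope group_scope.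

(* Write xy = u w with u := xS yS in S and w := xT^lam yT in T.  Conjugation
   by u acts on the abelian group T as the lam-th power map, so
   (u w)^k = u^k w^(1 + lam + ... + lam^(k-1)), and #[xy] = #[u] as soon as
   w is killed by the geometric sum g = 1 + ... + lam^(#[u]-1).  Since
   lam^#[u] acts trivially, g lam + 1 = g + lam^#[u] shows that z^g is fixed by
   the lam-th power map for z = xT, yT; hence z^g is centralised by xS, yS and
   by T, so it lies in T :&: 'Z(G) = 1. *)

Definition geom_sum (lam k : nat) : nat := \sum_(i < k) lam ^ i.

Lemma geom_sumSl lam k : geom_sum lam k.+1 = (lam * geom_sum lam k).+1.
Proof.
rewrite /geom_sum big_ord_recl expn0 big_distrr /= add1n.
by congr _.+1; apply: eq_bigr => i _; rewrite expnS.
Qed.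

Lemma geom_sumSr lam k : geom_sum lam k.+1 = geom_sum lam k + lam ^ k.
Proof. by rewrite /geom_sum big_ord_recr. Qed.

Section PowerConjugation.

Variables (gT : finGroupType) (u w : gT) (lam : nat).
Hypothesis cwu : w ^ u = w ^+ lam.

Lemma conjg_expg_power k : w ^ (u ^+ k) = w ^+ (lam ^ k).
Proof.
elim: k => [|k IHk]; first by rewrite expg0 conjg1 expn0 expg1.
by rewrite expgSr conjgM IHk conjXg cwu -expgM -expnS.
Qed.

Lemma expMg_power_conj k : (u * w) ^+ k = u ^+ k * w ^+ geom_sum lam k.
Proof.
elim: k => [|k IHk]; first by rewrite /geom_sum big_ord0 !expg0 mulg1.
rewrite expgSr IHk geom_sumSl expgSr -!mulgA; congr (_ * _).
by rewrite mulgA (conjgC _ u) -mulgA conjXg cwu -expgM mulnC expgSr.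
Qed.

Lemma expg_geom_sum_order_fixed :
  (w ^+ geom_sum lam #[u]) ^+ lam = w ^+ geom_sum lam #[u].
Proof.
apply: (mulIg w); rewrite -expgM -expgSr mulnC -geom_sumSl geom_sumSr expgD.
by rewrite -conjg_expg_power expg_order conjg1.
Qed.

Lemma order_mul_power_conj (T S : {group gT}) :
    T :&: S = 1 -> u \in S -> w \in T -> w ^+ geom_sum lam #[u] = 1 ->
  #[u * w] = #[u].
Proof.
move=> tiTS Su Tw wg1; apply/eqP; rewrite eqn_dvd; apply/andP; split.
  by rewrite order_dvdn expMg_power_conj expg_order wg1 mulg1.
rewrite order_dvdn; have := expg_order (u * w); rewrite expMg_power_conj.
move/(canRL (mulgK _)); rewrite mul1g => uk.
have : u ^+ #[u * w] \in T :&: S.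
  by rewrite inE (groupX _ Su) andbT uk groupV groupX.
by rewrite tiTS inE.
Qed.

End PowerConjugation.

Lemma commute_expg_conj_power (gT : finGroupType) (z g : gT) lam e :
  (z ^+ e) ^+ lam = z ^+ e -> z ^ g = z ^+ lam -> commute (z ^+ e) g.
Proof.
move=> fix_ze czg; rewrite /commute conjgC conjXg czg -expgM mulnC expgM.
by rewrite fix_ze.
Qed.

Section CanonicalDecomposition.

Variables (gT : finGroupType) (G T S : {group gT}) (xT yT xS yS : gT).
Variable lam : nat.
Hypotheses (defG : T ><| S = G) (defT : <[xT]> \x <[yT]> = T).
Hypothesis defS : <[xS]> * <[yS]> = S.
Hypotheses (cxTxS : xT ^ xS = xT) (cyTxS : yT ^ xS = yT ^+ lam).
Hypotheses (cxTyS : xT ^ yS = xT ^+ lam) (cyTyS : yT ^ yS = yT).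
Hypothesis tiTZ : T :&: 'Z(G) = 1.

Lemma abelian_T : abelian T.
Proof.
have [_ <- cXY _] := dprodP defT.
by rewrite abelianM !cycle_abelian cXY.
Qed.

Lemma xT_in_T : xT \in T.
Proof.
by have [_ <- _ _] := dprodP defT; rewrite -{1}[xT]mulg1 mem_mulg ?cycle_id.
Qed.

Lemma yT_in_T : yT \in T.
Proof.
by have [_ <- _ _] := dprodP defT; rewrite -{1}[yT]mul1g mem_mulg ?cycle_id.
Qed.

Lemma xS_in_S : xS \in S.
Proof. by rewrite -defS -{1}[xS]mulg1 mem_mulg ?cycle_id ?group1. Qed.

Lemma yS_in_S : yS \in S.
Proof. by rewrite -defS -{1}[yS]mul1g mem_mulg ?cycle_id ?group1. Qed.

Lemma cent_gens_eq1 z : z \in T -> commute z xS -> commute z yS -> z = 1.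
Proof.
move=> Tz czx czy; apply/set1gP; rewrite -tiTZ inE Tz /=.
have [_ defTS _ _] := sdprodP defG.
rewrite /center inE -defTS (subsetP (mulG_subl S T) z Tz) centM inE.
rewrite (subsetP abelian_T z Tz) -defS centM inE !cent_cycle.
by apply/and4P; split=> //; apply/cent1P.
Qed.

Lemma conjg_xT_mul : xT ^ (xS * yS) = xT ^+ lam.
Proof. by rewrite conjgM cxTxS cxTyS. Qed.

Lemma conjg_yT_mul : yT ^ (xS * yS) = yT ^+ lam.
Proof. by rewrite conjgM cyTxS conjXg cyTyS. Qed.

Lemma expg_geom_sum_xT : xT ^+ geom_sum lam #[xS * yS] = 1.
Proof.
have fixed := expg_geom_sum_order_fixed conjg_xT_mul.
apply: cent_gens_eq1; first by rewrite groupX ?xT_in_T.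
  by apply/commute_sym/commuteX/commute_sym; rewrite /commute conjgC cxTxS.
exact: commute_expg_conj_power fixed cxTyS.
Qed.

Lemma expg_geom_sum_yT : yT ^+ geom_sum lam #[xS * yS] = 1.
Proof.
have fixed := expg_geom_sum_order_fixed conjg_yT_mul.
apply: cent_gens_eq1; first by rewrite groupX ?yT_in_T.
  exact: commute_expg_conj_power fixed cyTxS.
by apply/commute_sym/commuteX/commute_sym; rewrite /commute conjgC cyTyS.
Qed.

Lemma order_canonical_mul :
  #[xS * xT * (yS * yT)] = #[xS * yS].
Proof.
have cxy : commute (xT ^+ lam) yT.
  by apply: (centsP abelian_T); rewrite ?groupX ?xT_in_T ?yT_in_T.
set u := xS * yS; set w := xT ^+ lam * yT.
have -> : xS * xT * (yS * yT) = u * w.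
  by rewrite /u /w -cxTyS conjgE !mulgA mulgK.
have cwu : w ^ u = w ^+ lam.
  by rewrite conjMg conjXg conjg_xT_mul conjg_yT_mul expgMn // -!expgM.
have [_ _ _ tiTS] := sdprodP defG.
apply: (order_mul_power_conj cwu tiTS).
- by rewrite groupM ?xS_in_S ?yS_in_S.
- by rewrite groupM ?groupX ?xT_in_T ?yT_in_T.
- rewrite expgMn // -expgM mulnC expgM.
  by rewrite expg_geom_sum_xT expg_geom_sum_yT expg1n mulg1.
Qed.

End CanonicalDecomposition.

Theorem lemma9p1 (gT : finGroupType) (G T S : {group gT})
    (x y xT yT xS yS : gT) (n t s lam : nat) :
  isobicyclic G x y n ->
  standard_triple T xT yT t ->
  isobicyclic S xS yS s ->
  T ><| S = G ->
  x = xS * xT -> y = yS * yT ->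
  coprime lam t ->
  xT ^ xS = xT -> yT ^ xS = yT ^+ lam ->
  xT ^ yS = xT ^+ lam -> yT ^ yS = yT ->
  T :&: 'Z(G) = 1 ->
  #[x * y] = #[xS * yS].
Proof.
move=> _ [_ _ defT] [_ _ defS _ _] defG -> -> _ cxTxS cyTxS cxTyS cyTyS tiTZ.
exact: (order_canonical_mul defG defT defS cxTxS cyTxS cxTyS cyTyS tiTZ).
Qed.
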